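(* There is an absolute constant $C$ such that the following holds for every integer $n\ge 2$: if $(x_1,\dots,x_n)\in A_n$ is a point at which $S_n$ attains its maximum over $A_n$ and $x_1=n$, then $S_n(x_1,\dots,x_n)\le n^3+Cn^2$.
   Context: For an integer $n\ge 2$, $A_n$ is the set of integer vectors $(x_1,\dots,x_n)\in\mathbb{Z}^n$ such that $n\ge x_1\ge x_2\ge\cdots\ge x_n\ge 0$, $\sum_{i=1}^k x_i\le 2n+6k-16$ for every $k\in\{1,\dots,n\}$, and $\sum_{i=1}^n x_i\le 6n-12$. For an integer $m\ge 2$, $S_m:\mathbb{R}^m\to\mathbb{R}$ is defined by $S_m(x_1,\dots,x_m)=\sum_{i=1}^{m-1}\sum_{j=i+1}^{m} x_i x_j^2$. *)

From mathcomp Require Import all_boot all_order all_algebra.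
Set Implicit Arguments. Unset Strict Implicit. Unset Printing Implicit Defensive.
Import Order.TTheory GRing.Theory Num.Theory.
Local Open Scope ring_scope.

(* Vectors (x_1,...,x_n) in Z^n are represented as functions x : nat -> int,
   using 1-based indices 1..n; values outside 1..n are irrelevant. *)

Definition inA (n : nat) (x : nat -> int) : Prop :=
  [/\ x 1%N <= n%:Z,
      (forall i : nat, (1 <= i < n)%N -> x i.+1 <= x i),
      0 <= x n,
      (forall k : nat, (1 <= k <= n)%N ->
          \sum_(1 <= i < k.+1) x i <= 2 * n%:Z + 6 * k%:Z - 16)
    & \sum_(1 <= i < n.+1) x i <= 6 * n%:Z - 12].

Definition S (n : nat) (x : nat -> int) : int :=
  \sum_(1 <= i < n) \sum_(i.+1 <= j < n.+1) x i * x j ^+ 2.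

From mathcomp Require Import all_boot all_order all_algebra.
From mathcomp Require Import zify ring lra.
Set Implicit Arguments. Unset Strict Implicit. Unset Printing Implicit Defensive.
Import Order.TTheory GRing.Theory Num.Theory.
Local Open Scope ring_scope.

(* Write P_m = x_1 + ... + x_m and S^(m) = sum_{i<j<=m} x_i x_j^2,
   so that S^(m+1) = S^(m) + x_{m+1}^2 P_m.  For x in A_n with x_1 = n we show
   by induction on m = 2..n that S^(m) is bounded by the "potential"
     Phi_m = -n a^2 + 2n(n+6) a + 12n(P_m - n) + 2n x_m (P_m - 2n - 6m)
             + 48n(P_m - n - a),          where a = x_2,
   together with the auxiliary invariant m x_m <= P_m.  The induction step is
   a pure inequality in an ordered ring ([potential_step]), fed by the prefix
   constraints of A_n and the monotonicity of x.  At m = n the total-sum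
   constraint P_n <= 6n - 12 turns Phi_n into at most n^3 + 312 n^2
   ([potential_final]).  In particular the bound holds for every point of A_n
   with x_1 = n. *)

Section Potential.
Context {R : realDomainType}.

(* The potential Phi_m, with N = n, a = x_2, M = m, xm = x_m and P = P_m. *)
Definition potential (N a M xm P : R) : R :=
  - N * a ^+ 2 + 2 * N * (N + 6) * a + 12 * N * (P - N)
  + 2 * N * xm * (P - 2 * N - 6 * M) + 48 * N * (P - N - a).

Lemma potential_step (N a2 M a b P : R) :
  0 <= N -> 0 <= M -> M <= N -> 0 <= b -> b <= a ->
  P <= 2 * N + 6 * M - 16 -> M * a <= P ->
  potential N a2 M a P + b ^+ 2 * P <= potential N a2 (M + 1) b (P + b)
  /\ (M + 1) * b <= P + b.
Proof.
move=> N0 M0 MN b0 ba Pmax MaP.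
have last_entry : 2 * N * a * (P - 2 * N - 6 * M)
                  <= 2 * N * b * (P - 2 * N - 6 * M).
  have : 0 <= 2 * N * (a - b) * (2 * N + 6 * M - P).
    by apply: mulr_ge0; [apply: mulr_ge0; lra | lra].
  lra.
have MbP : M * b <= P by apply: le_trans MaP; apply: ler_wpM2l.
have new_term : b ^+ 2 * P <= b ^+ 2 * (2 * N + 6 * M).
  by apply: ler_wpM2l; [apply: sqr_ge0 | lra].
have square_term : 6 * M * b ^+ 2 <= 48 * N * b.
  have : b * (M * b) <= b * (8 * N) by apply: ler_wpM2l; lra.
  lra.
split; first by rewrite /potential; lra.
have : M * b <= M * a by apply: ler_wpM2l.
lra.
Qed.

Lemma potential_final (N a b P : R) :
  0 <= N -> 0 <= a -> a <= N -> 0 <= b -> P <= 6 * N - 12 ->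
  potential N a N b P <= N ^+ 3 + 312 * N ^+ 2.
Proof.
move=> N0 a0 aN b0 Pmax.
have quadratic_in_a : 0 <= N * (N - a) ^+ 2 by apply: mulr_ge0 => //; apply: sqr_ge0.
have last_term : 0 <= N * b * (8 * N - P) by apply: mulr_ge0; [apply: mulr_ge0 | lra].
have total_sum : 0 <= N * (6 * N - 12 - P) by apply: mulr_ge0; lra.
have Na : 0 <= N * (N - a) by apply: mulr_ge0; lra.
have Na0 : 0 <= N * a by apply: mulr_ge0.
have NN : 0 <= N * N by apply: mulr_ge0.
rewrite /potential; nra.
Qed.

End Potential.

Definition psum (x : nat -> int) (m : nat) : int := \sum_(1 <= i < m.+1) x i.
Definition Spart (x : nat -> int) (m : nat) : int :=
  \sum_(1 <= i < m) \sum_(i.+1 <= j < m.+1) x i * x j ^+ 2.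

Lemma psumS x m : psum x m.+1 = psum x m + x m.+1.
Proof. by rewrite /psum big_nat_recr. Qed.

Lemma SpartS x m : Spart x m.+1 = Spart x m + x m.+1 ^+ 2 * psum x m.
Proof.
rewrite /Spart /psum.
under eq_big_nat => i /andP[_ Hi] do rewrite big_nat_recr //=.
rewrite big_split /= -big_distrl /= mulrC; congr (_ + _).
case: m => [|m]; first by rewrite !big_geq.
by rewrite big_nat_recr //= [X in _ + X]big_geq // addr0.
Qed.

Lemma inA_antitone n x : inA n x ->
  forall i j, (1 <= i)%N -> (i <= j <= n)%N -> x j <= x i.
Proof.
case=> _ dec _ _ _ i j i1; elim: j => [|j IH] /andP[ij jn].
  by move: i1 ij; rewrite leqn0 => + /eqP ->.
have [->|ij'] := eqVneq i j.+1; first by [].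
apply: le_trans (IH _); first by apply: dec; lia.
by apply/andP; lia.
Qed.

Lemma inA_ge0 n x : inA n x -> forall i, (1 <= i <= n)%N -> 0 <= x i.
Proof.
move=> xA i /andP[i1 iN]; have [_ _ xn0 _ _] := xA.
apply: le_trans xn0 (inA_antitone xA (j := n) i1 _); lia.
Qed.

Lemma Spart_potential n x : inA n x -> x 1%N = n%:Z ->
  forall m, (2 <= m <= n)%N ->
  Spart x m <= potential n%:Z (x 2%N) m%:Z (x m) (psum x m)
  /\ m%:Z * x m <= psum x m.
Proof.
move=> xA x1; have [_ _ _ prefix _] := xA.
case=> [|[|m]] //; elim: m => [|m IH] /andP[_ mn].
  have P2 : psum x 2 = n%:Z + x 2%N by rewrite /psum big_nat_recr //= big_nat1 x1.
  have S2 : Spart x 2 = n%:Z * x 2%N ^+ 2 by rewrite /Spart !big_nat1 x1.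
  have x2n : x 2%N <= n%:Z by rewrite -x1; apply: (inA_antitone xA (i := 1) (j := 2)); lia.
  rewrite P2 S2 /potential; split; lra.
have [IHS IHm] := IH ltac:(apply/andP; lia).
have [step inv] := @potential_step _ n%:Z (x 2%N) m.+2%:Z (x m.+2) (x m.+3)
  (psum x m.+2) (le0z_nat n) (le0z_nat m.+2) ltac:(rewrite lez_nat; lia)
  (inA_ge0 xA (i := m.+3) ltac:(lia))
  (inA_antitone xA (i := m.+2) (j := m.+3) ltac:(lia) ltac:(lia))
  (prefix m.+2 ltac:(lia)) IHm.
have -> : m.+3%:Z = m.+2%:Z + 1 by rewrite -addn1 PoszD.
rewrite SpartS [psum x m.+3]psumS; split; last exact: inv.
by apply: le_trans step; rewrite lerD2r.
Qed.

Theorem lemma7 :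
  exists C : int, forall (n : nat), (2 <= n)%N ->
    forall x : nat -> int, inA n x ->
      (forall y : nat -> int, inA n y -> S n y <= S n x) ->
      x 1%N = n%:Z ->
      S n x <= n%:Z ^+ 3 + C * n%:Z ^+ 2.
Proof.
exists 312 => n n2 x xA _ x1.
have [_ _ _ _ total] := xA.
have [Sn _] := Spart_potential xA x1 ltac:(apply/andP; split; [exact: n2 | exact: leqnn]).
change (Spart x n <= n%:Z ^+ 3 + 312 * n%:Z ^+ 2).
apply: le_trans Sn (potential_final _ _ _ _ _) => //.
- by apply: (inA_ge0 xA); lia.
- by rewrite -x1; apply: (inA_antitone xA (i := 1) (j := 2)); lia.
- by apply: (inA_ge0 xA); lia.
Qed.
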